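(* Let $\pi\in\mathfrak{F}_n$ and $\pi'\in\mathfrak{F}_{n'}$. If the integral ideal $\mathfrak{n}$ satisfies $\gcd(\mathfrak{n},\mathfrak{q}_\pi\mathfrak{q}_{\pi'})=\mathcal{O}_F$, then \[ |\mu_{\pi\times\pi'}(\mathfrak{n})|\le\tfrac12\big(\lambda_{\pi\times\tilde\pi}(\mathfrak{n})+\lambda_{\pi'\times\tilde\pi'}(\mathfrak{n})\big). \]
   Context: $F$ is a number field, $\mathcal{O}_F$ its ring of integers, $\mathfrak{F}_n$ the set of cuspidal automorphic representations of $\mathrm{GL}_n(\mathbb{A}_F)$ with unitary central character, $\mathfrak{q}_\pi$ the arithmetic conductor, $\tilde\pi$ the contragredient. $\lambda_{\pi\times\pi'}(\mathfrak{n})$ is the $\mathfrak{n}$-th Dirichlet coefficient of the Rankin–Selberg $L$-function $L(s,\pi\times\pi')$. For $\mathfrak{n}$ coprime to $\mathfrak{q}_\pi\mathfrak{q}_{\pi'}$, $\mu_{\pi\times\pi'}(\mathfrak{n})$ is multiplicative with $\sum_{k\ge0}\mu_{\pi\times\pi'}(\mathfrak{p}^k)\mathrm{N}\mathfrak{p}^{-ks}=\prod_{j=1}^n\prod_{j'=1}^{n'}(1-\alpha_{j,\pi}(\mathfrak{p})\alpha_{j',\pi'}(\mathfrak{p})\mathrm{N}\mathfrak{p}^{-s})$, where $\alpha_{j,\pi}(\mathfrak{p})$ are the Satake parameters of $\pi$ at $\mathfrak{p}$. *)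

From HB Require Import structures.
From mathcomp Require Import all_boot all_order all_algebra all_field.
Set Implicit Arguments. Unset Strict Implicit. Unset Printing Implicit Defensive.
Import Order.TTheory GRing.Theory Num.Theory.
Local Open Scope ring_scope.

(* Unramified local data of a cuspidal automorphic representation of GL_n(A_F):
   P is the type of (nonzero) prime ideals of O_F, [ramified p] means p | q_pi,
   and [satake p] lists the Satake parameters alpha_{j,pi}(p), j < n
   (only meaningful when p is unramified). *)
Record autrep (P : eqType) (n : nat) := AutRep {
  ramified : pred P;
  satake : P -> 'I_n -> algC }.

Definition contragredient (P : eqType) n (pi : autrep P n) : autrep P n :=
  AutRep (ramified pi) (fun p j => (satake pi p j)^*).

Definition mu_loc n n' (a : 'I_n -> algC) (b : 'I_n' -> algC) (k : nat) : algC :=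
  (\prod_(ij : 'I_n * 'I_n') (1 - (a ij.1 * b ij.2) *: 'X))`_k.

(* coefficient of X^k in prod_{j,j'} (1 - a_j b_j' X)^{-1}
   = prod_{j,j'} sum_e (a_j b_j')^e X^e : lambda_{pi x pi'}(p^k) at unramified p *)
Definition lambda_loc n n' (a : 'I_n -> algC) (b : 'I_n' -> algC) (k : nat) : algC :=
  \sum_(f : {ffun 'I_n * 'I_n' -> 'I_k.+1} | (\sum_ij (f ij : nat) == k)%N)
     \prod_(ij : 'I_n * 'I_n') (a ij.1 * b ij.2) ^+ f ij.

(* An integral ideal n = prod_{p in s} p^(e p), with s duplicate free. *)
Definition rs_mu (P : eqType) n n' (pi : autrep P n) (pi' : autrep P n')
  (s : seq P) (e : P -> nat) : algC :=
  \prod_(p <- s) mu_loc (satake pi p) (satake pi' p) (e p).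

Definition rs_lambda (P : eqType) n n' (pi : autrep P n) (pi' : autrep P n')
  (s : seq P) (e : P -> nat) : algC :=
  \prod_(p <- s) lambda_loc (satake pi p) (satake pi' p) (e p).

From HB Require Import structures.
From mathcomp Require Import all_boot all_order all_algebra all_field.
From mathcomp Require Import ring.
Set Implicit Arguments. Unset Strict Implicit. Unset Printing Implicit Defensive.
Import Order.TTheory GRing.Theory Num.Theory.
Local Open Scope ring_scope.

(* Both sides are products over the primes p dividing n, so it suffices to
   bound one Euler factor.  Fix Satake parameters a = (a_j), b = (b_j') at p
   and write P_i(x) = sum_j x_j^i for power sums.  Applying X d/dX log to the
   generating products prod (1 - a_j b_j' X) and prod (1 - a_j conj(a_j') X)^-1
   gives Newton's identities
      k mu_k = - sum_{i=1..k} P_i(a) P_i(b) mu_(k-i),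
      k A_k  =   sum_{i=1..k} |P_i(a)|^2 A_(k-i),
   (likewise B_k for b), where A_k = lambda_{pi x pi~}(p^k).  Since lambda is
   defined through truncated geometric series, logarithmic derivatives are
   taken modulo X^(K+1).  From the recursions, strong induction on k with the
   triangle and Cauchy-Schwarz inequalities gives A_k, B_k >= 0 and
   |mu_k|^2 <= A_k B_k; multiplying over p and applying AM-GM proves the
   theorem.  The bound holds for arbitrary parameters. *)

Section TruncatedSeries.
Variable R : comNzRingType.
Implicit Types (K : nat) (z : R) (p q L P : {poly R}).

Definition eq_upto K p q := forall j, (j <= K)%N -> p`_j = q`_j.

Lemma eq_upto_mull {K} r {p q} : eq_upto K p q -> eq_upto K (r * p) (r * q).
Proof.
move=> epq j le_jK; rewrite !coefM; apply: eq_bigr => i _.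
by rewrite epq // (leq_trans (leq_subr _ _)).
Qed.

Lemma eq_upto_mulr {K} r {p q} : eq_upto K p q -> eq_upto K (p * r) (q * r).
Proof. by rewrite ![_ * r]mulrC; apply: eq_upto_mull. Qed.

Definition logder_upto K L P := eq_upto K ('X * P^`()) (L * P).

Lemma logder_upto_prod (I : Type) (r : seq I) K (L P : I -> {poly R}) :
  (forall i, logder_upto K (L i) (P i)) ->
  logder_upto K (\sum_(i <- r) L i) (\prod_(i <- r) P i).
Proof.
move=> dP; elim: r => [|i r IH] j le_jK.
  by rewrite !big_nil derivC mulr0 mul0r.
rewrite !big_cons derivM mulrDr coefD mulrA (eq_upto_mulr _ (dP i)) //.
rewrite mulrCA (eq_upto_mull _ IH) // -coefD.
by apply: (congr1 (fun q : {poly R} => q`_j)); ring.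
Qed.

Definition newton_rec K (w h : nat -> R) :=
  forall j, (j < K)%N -> h j.+1 *+ j.+1 = \sum_(i < j.+1) w i.+1 * h (j - i)%N.

Lemma logder_upto_rec K L P (w : nat -> R) : logder_upto K L P -> L`_0 = 0 ->
  (forall i, (0 < i <= K)%N -> L`_i = w i) -> newton_rec K w (fun j => P`_j).
Proof.
move=> dP L0 Lw j lt_jK.
have -> : P`_j.+1 *+ j.+1 = ('X * P^`())`_j.+1 by rewrite coefXM coef_deriv.
rewrite dP // coefM big_ord_recl L0 mul0r add0r; apply: eq_bigr => i _.
by rewrite lift0 subSS Lw // (leq_trans (ltn_ord i)).
Qed.

(* [powsum_poly z K] = sum_{1 <= m <= K} z^m X^m, the truncated logarithmic
   derivative of 1/(1 - zX). *)
Definition powsum_poly z K := \poly_(m < K.+1) (if m == 0%N then 0 else z ^+ m).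

Definition geom_poly z K := \poly_(m < K.+1) z ^+ m.

Lemma logder_linear K z : logder_upto K (- powsum_poly z K) (1 - z *: 'X).
Proof.
move=> j le_jK; rewrite derivB derivC derivZ derivX sub0r coefXM.
rewrite mulNr !coefN mulrBr mulr1 coefB -scalerAr !coefZ coefMX !coef_poly coef1.
case: j le_jK => [|[|j]] le_jK /=; rewrite ?ltnS ?le_jK ?(ltnW le_jK).
- by rewrite mulr0 subr0 oppr0.
- by rewrite mulr1 mulr0 subr0 expr1.
- by rewrite mulr0 -exprS subrr oppr0.
Qed.

Lemma logder_geom K z : logder_upto K (powsum_poly z K) (geom_poly z K).
Proof.
move=> j le_jK; rewrite coefXM coefM.
case: j le_jK => [|j] le_jK /=; first by rewrite big_ord1 !coef_poly mul0r.
rewrite coef_deriv coef_poly ltnS le_jK big_ord_recl coef_poly mul0r add0r.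
rewrite (eq_bigr (fun _ => z ^+ j.+1)) ?sumr_const ?card_ord // => i _.
have le_iK : (i < K)%N := leq_trans (ltn_ord i) le_jK.
rewrite !coef_poly lift0 /= ltnS le_iK subSS ltnS.
rewrite (leq_trans (leq_subr _ _) (ltnW le_jK)).
by rewrite -exprD addSn subnKC // -ltnS.
Qed.

Lemma coef_sum_powsum (I : finType) (c : I -> R) K i : (0 < i <= K)%N ->
  (\sum_x powsum_poly (c x) K)`_i = \sum_x c x ^+ i.
Proof.
case/andP=> i_gt0 le_iK; rewrite coef_sum; apply: eq_bigr => x _.
by rewrite coef_poly ltnS le_iK eqn0Ngt i_gt0.
Qed.

Lemma coef0_sum_powsum (I : finType) (c : I -> R) K :
  (\sum_x powsum_poly (c x) K)`_0 = 0.
Proof. by rewrite coef_sum big1 // => x _; rewrite coef_poly. Qed.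

End TruncatedSeries.

Section NewtonInequality.
Variable R : numDomainType.
Implicit Types (K : nat) (s x y : R).

Lemma agm_bound s x y : 0 <= s -> 0 <= x -> 0 <= y ->
  s ^+ 2 <= x * y -> s *+ 2 <= x + y.
Proof.
move=> s_ge0 x_ge0 y_ge0 sxy.
rewrite -ler_sqr ?nnegrE ?mulrn_wge0 ?addr_ge0 //.
apply: le_trans (real_leif_AGM2_scaled (ger0_real x_ge0) (ger0_real y_ge0)).1.
by rewrite -[s *+ 2]mulr_natr exprMn -natrX mulr_natr ler_wMn2r.
Qed.

Lemma sum_sqr_le_prod (I : finType) (t a b : I -> R) :
  (forall i, 0 <= t i) -> (forall i, 0 <= a i) -> (forall i, 0 <= b i) ->
  (forall i, t i ^+ 2 <= a i * b i) ->
  (\sum_i t i) ^+ 2 <= (\sum_i a i) * (\sum_i b i).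
Proof.
move=> t_ge0 a_ge0 b_ge0 tab; rewrite -(ler_pMn2r (n := 2)) //.
have -> : (\sum_i a i) * (\sum_i b i) *+ 2 =
          \sum_i \sum_k (a i * b k + a k * b i).
  rewrite mulr2n [X in _ + X]mulrC !big_distrlr -big_split /=.
  apply: eq_bigr => i _; rewrite -big_split.
  by apply: eq_bigr => k _; rewrite [b i * _]mulrC.
rewrite expr2 big_distrlr /= -sumrMnl; apply: ler_sum => i _.
rewrite -sumrMnl; apply: ler_sum => k _.
apply: agm_bound; rewrite ?mulr_ge0 //.
have -> : a i * b k * (a k * b i) = a i * b i * (a k * b k) by ring.
by rewrite exprMn ler_pM ?exprn_ge0.
Qed.

Lemma newton_rec_ge0 K (w h : nat -> R) : newton_rec K w h ->
  forall j, (j <= K)%N -> h 0%N = 1 -> (forall i, 0 <= w i) -> 0 <= h j.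
Proof.
move=> rec_h j le_jK h0 w_ge0.
elim/ltn_ind: j le_jK => -[_ _|j IH lt_jK]; first by rewrite h0.
rewrite -(pmulrn_lge0 _ (ltn0Sn j)) rec_h //; apply: sumr_ge0 => i _.
apply: mulr_ge0 => //; apply: IH; first by rewrite ltnS leq_subr.
exact: leq_trans (leq_subr _ _) (ltnW lt_jK).
Qed.

Variables (K : nat) (u v c hA hB : nat -> R).
Hypothesis rec_c : newton_rec K (fun i => - (u i * v i)) c.
Hypothesis rec_A : newton_rec K (fun i => `|u i| ^+ 2) hA.
Hypothesis rec_B : newton_rec K (fun i => `|v i| ^+ 2) hB.
Hypotheses (hA_ge0 : forall j, (j <= K)%N -> 0 <= hA j)
           (hB_ge0 : forall j, (j <= K)%N -> 0 <= hB j).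

(* One step of the induction: the bound |c|^2 <= hA hB propagates through the
   recursions, by the triangle and Cauchy-Schwarz inequalities. *)
Lemma newton_rec_step j : (j < K)%N ->
  (forall m, (m <= j)%N -> `|c m| ^+ 2 <= hA m * hB m) ->
  `|c j.+1| ^+ 2 <= hA j.+1 * hB j.+1.
Proof.
move=> lt_jK IH; have le_K (i : 'I_j.+1) : (j - i <= K)%N.
  exact: leq_trans (leq_subr _ _) (ltnW lt_jK).
pose T (i : 'I_j.+1) := `|u i.+1| * `|v i.+1| * `|c (j - i)%N|.
have T_ge0 i : 0 <= T i by rewrite !mulr_ge0.
have c_le_T : `|c j.+1| *+ j.+1 <= \sum_i T i.
  rewrite -normrMn rec_c //; apply: le_trans (ler_norm_sum _ _ _) _.
  by apply: ler_sum => i _; rewrite mulNr normrN !normrM.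
have : (`|c j.+1| *+ j.+1) ^+ 2 <= (hA j.+1 *+ j.+1) * (hB j.+1 *+ j.+1).
  rewrite rec_A // rec_B //; apply: le_trans (_ : (\sum_i T i) ^+ 2 <= _).
    by rewrite ler_sqr ?nnegrE ?sumr_ge0 ?mulrn_wge0.
  apply: sum_sqr_le_prod => // i.
  - by rewrite mulr_ge0 ?exprn_ge0 ?hA_ge0.
  - by rewrite mulr_ge0 ?exprn_ge0 ?hB_ge0.
  - rewrite /T !exprMn [X in _ <= X]mulrACA ler_wpM2l ?mulr_ge0 ?exprn_ge0 //.
    exact/IH/leq_subr.
rewrite expr2 mulrnAl mulrnAr mulrnAl mulrnAr -expr2.
by rewrite !ler_pMn2r.
Qed.

Lemma newton_rec_bound : c 0%N = 1 -> hA 0%N = 1 -> hB 0%N = 1 ->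
  forall j, (j <= K)%N -> `|c j| ^+ 2 <= hA j * hB j.
Proof.
move=> c0 hA0 hB0; elim/ltn_ind => -[_ _|j IH lt_jK].
  by rewrite c0 hA0 hB0 normr1 expr1n mulr1.
apply: newton_rec_step => // m le_mj.
by apply: IH; rewrite ?ltnS // (leq_trans le_mj (ltnW lt_jK)).
Qed.

End NewtonInequality.

Definition power_sum m (x : 'I_m -> algC) k := \sum_i x i ^+ k.

Section LocalFactors.
Variables (n n' : nat) (a : 'I_n -> algC) (b : 'I_n' -> algC).

Lemma power_sum_pair k :
  \sum_(ij : 'I_n * 'I_n') (a ij.1 * b ij.2) ^+ k = power_sum a k * power_sum b k.
Proof.
rewrite /power_sum big_distrlr pair_bigA /=.
by apply: eq_bigr => ij _; rewrite exprMn.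
Qed.

(* prod_{j,j'} sum_{m <= K} (a_j b_j' X)^m: up to degree K it agrees with the
   Euler factor prod_{j,j'} (1 - a_j b_j' X)^-1 whose coefficients are
   [lambda_loc a b]. *)
Definition lambda_poly K := \prod_(ij : 'I_n * 'I_n') geom_poly (a ij.1 * b ij.2) K.

Lemma lambda_loc_coef k : lambda_loc a b k = (lambda_poly k)`_k.
Proof.
rewrite /lambda_poly /lambda_loc.
under [in RHS]eq_bigr => ij _ do rewrite /geom_poly poly_def.
rewrite bigA_distr_bigA coef_sum big_mkcond /=; apply: eq_bigr => f _.
under [in RHS]eq_bigr => ij _ do rewrite -mul_polyC.
rewrite big_split /= prodrXr -rmorph_prod coefCM coefXn eq_sym.
by case: eqP; rewrite ?mulr1 ?mulr0.
Qed.

Lemma lambda_poly_coef0 K : (lambda_poly K)`_0 = 1.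
Proof. by rewrite coef0_prod big1 // => ij _; rewrite coef_poly. Qed.

Lemma mu_loc0 : mu_loc a b 0 = 1.
Proof.
rewrite /mu_loc coef0_prod big1 // => ij _.
by rewrite coefB coef1 coefZ coefX mulr0 subr0.
Qed.

Lemma mu_loc_rec K :
  newton_rec K (fun i => - (power_sum a i * power_sum b i)) (mu_loc a b).
Proof.
apply: (@logder_upto_rec _ K (\sum_ij - powsum_poly (a ij.1 * b ij.2) K)).
- by apply: logder_upto_prod => ij; apply: logder_linear.
- by rewrite sumrN coefN coef0_sum_powsum oppr0.
- by move=> i hi; rewrite sumrN coefN coef_sum_powsum // power_sum_pair.
Qed.

End LocalFactors.

Lemma lambda_poly_rec n (a : 'I_n -> algC) K :
  newton_rec K (fun i => `|power_sum a i| ^+ 2)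
    (fun j => (lambda_poly a (fun k => (a k)^*) K)`_j).
Proof.
apply: (@logder_upto_rec _ K (\sum_ij powsum_poly (a ij.1 * (a ij.2)^*) K)).
- by apply: logder_upto_prod => ij; apply: logder_geom.
- exact: coef0_sum_powsum.
move=> i hi; rewrite coef_sum_powsum // (power_sum_pair a (fun k => (a k)^*)) normCK.
congr (_ * _).
by rewrite /power_sum rmorph_sum; apply: eq_bigr => k _; rewrite rmorphXn.
Qed.

Lemma local_bound n n' (a : 'I_n -> algC) (b : 'I_n' -> algC) k :
  [/\ 0 <= lambda_loc a (fun j => (a j)^*) k, 0 <= lambda_loc b (fun j => (b j)^*) k &
   `|mu_loc a b k| ^+ 2 <=
     lambda_loc a (fun j => (a j)^*) k * lambda_loc b (fun j => (b j)^*) k].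
Proof.
rewrite !lambda_loc_coef.
have ge0 m (x : 'I_m -> algC) j :
    (j <= k)%N -> 0 <= (lambda_poly x (fun i => (x i)^*) k)`_j.
  move=> le_jk; have := newton_rec_ge0 (lambda_poly_rec x (K:=k)) le_jk.
  by apply; [apply: lambda_poly_coef0 | move=> i; rewrite exprn_ge0].
split; rewrite ?ge0 //.
apply: (newton_rec_bound (mu_loc_rec a b (K:=k)) (lambda_poly_rec a (K:=k))
  (lambda_poly_rec b (K:=k)) (ge0 _ a) (ge0 _ b)) => //.
- exact: mu_loc0.
- exact: lambda_poly_coef0.
- exact: lambda_poly_coef0.
Qed.

Theorem lemma3p2 (P : eqType) (n n' : nat) (pi1 : autrep P n) (pi2 : autrep P n')
  (s : seq P) (e : P -> nat) :
  (0 < n)%N -> (0 < n')%N -> uniq s ->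
  (forall p, p \in s -> (0 < e p)%N -> ~~ ramified pi1 p /\ ~~ ramified pi2 p) ->
  `|rs_mu pi1 pi2 s e| <=
    (rs_lambda pi1 (contragredient pi1) s e + rs_lambda pi2 (contragredient pi2) s e) / 2%:R.
Proof.
move=> _ _ _ _; rewrite /rs_mu /rs_lambda /contragredient /=.
set M := \prod_(p <- s) _; set A := \prod_(p <- s) _; set B := \prod_(p <- s) _.
have bound p := local_bound (satake pi1 p) (satake pi2 p) (e p).
have A_ge0 : 0 <= A by apply: prodr_ge0 => p _; case: (bound p).
have B_ge0 : 0 <= B by apply: prodr_ge0 => p _; case: (bound p).
have MAB : `|M| ^+ 2 <= A * B.
  rewrite normr_prod -prodrXl -big_split /=; apply: ler_prod => p _.
  by case: (bound p) => _ _ ->; rewrite exprn_ge0.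
by rewrite ler_pdivlMr ?ltr0n // mulr_natr; apply: agm_bound.
Qed.
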